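(* For all mutually disjoint $K,I,J\subseteq\mathbb N_n$ put $$\beta_{K,I,J}\doteq\frac{1}{\sqrt{2^{\,n-|I\cup J|}}}\,b_K\,\mathbf c_{I,J}=\frac{1}{\sqrt{2^{\,n-|I\cup J|}}}\sum_{A\subseteq K}(-2)^{|A|}\,\mathbf n_A\,\mathbf c^*_I\mathbf c_J .$$ Then: (1) $\mathfrak B\doteq\{\beta_{K,I,J}: K,I,J\subseteq\mathbb N_n \text{ pairwise disjoint}\}$ is an orthonormal basis of $\mathcal L^2(\mathcal F)$. In fact $\langle b_K\mathbf c_{A,B},b_L\mathbf c_{C,D}\rangle_{\mathcal L^2(\mathcal F)}=\delta_{AC}\delta_{BD}\delta_{KL}\,2^{\,n-|A\cup B|}$ whenever $K,A,B$ are mutually disjoint and $L,C,D$ are mutually disjoint. (2) For every $k\in\mathbb N_0$, $\mathfrak B\cap\mathcal O_k$ is an orthonormal basis of $\mathcal O_k$. Explicitly, $$\mathfrak B\cap\mathcal O_k=\{\beta_{K,I,J}: K,I,J \text{ pairwise disjoint},\ |I|+|J|+2|K|=2l \text{ for some } 0\le l\le k\}.$$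
   Context: Let $\mathfrak h$ be a complex Hilbert space of finite dimension $n$ with a fixed orthonormal basis $\varphi_1,\dots,\varphi_n$, and let $\mathbb N_n=\{1,\dots,n\}$. Inner products are antilinear in the first argument. $\mathcal F=\bigoplus_{k=0}^n\bigwedge^k\mathfrak h$ is the fermion Fock space, with inner product $\langle f_1\wedge\cdots\wedge f_k,g_1\wedge\cdots\wedge g_l\rangle=\delta_{kl}\det(\langle f_i,g_j\rangle)_{i,j}$. Its vacuum $\Omega$ is $1\in\bigwedge^0\mathfrak h=\mathbb C$. The creation operators are $c^*(f)\omega=f\wedge\omega$, and $c(f)=c^*(f)^*$. For $A=\{a_1<\dots<a_k\}\subseteq\mathbb N_n$ put $\varphi_A=\varphi_{a_1}\wedge\cdots\wedge\varphi_{a_k}$, with $\varphi_\emptyset=\Omega$. Put - $\mathbf c^*_A=c^*(\varphi_{a_1})\cdots c^*(\varphi_{a_k})$, so that $\mathbf c^*_A\omega=\varphi_A\wedge\omega$; - $\mathbf c_A=(\mathbf c^*_A)^*=c(\varphi_{a_k})\cdots c(\varphi_{a_1})$; - $\mathbf c_{A,B}=\mathbf c^*_A\mathbf c_B$; - $\mathbf n_A=\mathbf c_{A,A}$. Empty products are the identity. For $K\subseteq\mathbb N_n$ define $b_K=\sum_{I\subseteq K}(-2)^{|I|}\mathbf n_I$. $\mathcal L^2(\mathcal F)$ is the space of all linear operators on $\mathcal F$ with inner product $\langle a,b\rangle=\operatorname{tr}(a^*b)$. For $\omega\in\mathcal F$ let $\mathbf c^*(\omega)\xi=\omega\wedge\xi$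 and $\mathbf c(\omega)=\mathbf c^*(\omega)^*$. For $k\in\mathbb N_0$, the space $\mathcal O_k$ of $k$-body operators is the complex linear span of all operators $\mathbf c^*(\omega)\mathbf c(\eta)$ with $\omega\in\bigwedge^r\mathfrak h$, $\eta\in\bigwedge^s\mathfrak h$, and $r+s=2l$ for some $0\le l\le k$. *)

(* Concrete model of the fermion Fock space over h = C^n. *)
From HB Require Import structures.
From mathcomp Require Import all_boot all_order all_algebra.
Set Implicit Arguments. Unset Strict Implicit. Unset Printing Implicit Defensive.
Import Order.TTheory GRing.Theory Num.Theory.
Local Open Scope ring_scope.

Section Fock.
Variables (C : numClosedFieldType) (n : nat).

(* Index type of the orthonormal basis phi_A (A subset of N_n = 'I_n) of F. *)
Definition FIdx := {set 'I_n}.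
Definition fdim := #|{: FIdx}|.

(* vectors of F : coordinates in the basis (phi_A)_A ; operators on F : matrices *)
Definition FVec := 'cV[C]_fdim.
Definition FOp := 'M[C]_fdim.

Definition coord (v : FVec) (A : FIdx) : C := v (enum_rank A) 0.

(* phi_A ; phi_set0 is the vacuum Omega *)
Definition phi (A : FIdx) : FVec := \col_i (i == enum_rank A)%:R.

(* sign of phi_A /\ phi_B = sgn * phi_(A u B), for disjoint A, B:
   (-1)^(number of pairs (a,b) in A x B with b < a) *)
Definition wsign (A B : FIdx) : C :=
  (-1) ^+ #|[set p : 'I_n * 'I_n | (p.1 \in A) && (p.2 \in B) && (p.2 < p.1)%N]|.

Definition wedge (w x : FVec) : FVec :=
  \col_i \sum_(A : FIdx) \sum_(B : FIdx)
     (if (A :&: B == set0) && (A :|: B == enum_val i)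
      then wsign A B * coord w A * coord x B else 0).

(* omega lies in the r-th exterior power *)
Definition homog (r : nat) (w : FVec) : Prop :=
  forall A : FIdx, #|A| != r -> coord w A = 0.

(* adjoint w.r.t. the inner product in which (phi_A) is orthonormal *)
Definition adj (M : FOp) : FOp := (map_mx (fun z : C => z^*) M)^T.

(* bold c^*(omega) xi = omega /\ xi ; bold c(omega) = its adjoint *)
Definition cstarF (w : FVec) : FOp := \matrix_(i, j) wedge w (phi (enum_val j)) i 0.
Definition cF (w : FVec) : FOp := adj (cstarF w).

(* one-particle vector phi_a of h, seen in /\^1 h *)
Definition phi1 (a : 'I_n) : FVec := phi [set a].

(* c^*_A = c^*(phi_a1) ... c^*(phi_ak), a1 < ... < ak *)
Definition cstarA (A : FIdx) : FOp := \prod_(a <- enum A) cstarF (phi1 a).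
Definition cA (A : FIdx) : FOp := adj (cstarA A).
Definition cAB (A B : FIdx) : FOp := cstarA A *m cA B.
Definition nA (A : FIdx) : FOp := cAB A A.

Definition bK (K : FIdx) : FOp := \sum_(I : FIdx | I \subset K) ((-2) ^+ #|I|) *: nA I.

Definition hs (a b : FOp) : C := \tr (adj a *m b).

Definition disj3 (K I J : FIdx) : bool :=
  [&& [disjoint K & I], [disjoint K & J] & [disjoint I & J]].

Definition beta (K I J : FIdx) : FOp :=
  (sqrtC ((2 : C) ^+ (n - #|I :|: J|)))^-1 *: (bK K *m cAB I J).

Definition inO (k : nat) (X : FOp) : Prop :=
  exists (m : nat) (a : 'I_m -> C) (r s : 'I_m -> nat) (w e : 'I_m -> FVec),
    (forall i, exists l, (l <= k)%N /\ (r i + s i = 2 * l)%N) /\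
    (forall i, homog (r i) (w i) /\ homog (s i) (e i)) /\
    X = \sum_(i < m) a i *: (cstarF (w i) *m cF (e i)).
End Fock.

From Pilot Require Import Defs.
From HB Require Import structures.
From mathcomp Require Import all_boot all_order all_algebra.
From mathcomp Require Import ring zify.
Import Order.TTheory GRing.Theory Num.Theory.
Set Implicit Arguments. Unset Strict Implicit. Unset Printing Implicit Defensive.
Local Open Scope ring_scope.

(* In the basis (phi_S) every operator in sight is monomial: it maps each phi_S to a
   multiple of a single basis vector.  Since the sum over I in K :&: S of (-2)^|I| is
   (-1)^|K :&: S|, b_K is diagonal with these signs, while c_{A,B} maps phi_S to
   +-phi_(A :|: (S :\: B)) when B is contained in S and A misses S :\: B, and to 0 otherwise.
   The Hilbert-Schmidt product <b_K c_{I,J}, b_L c_{A,B}> is thus a signed sum over S.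
   A nonzero term forces I = A :\: B and J = B :\: A; if moreover K and L differ at a
   point x outside A :|: B, toggling x in S is a sign-reversing involution on the terms,
   so the sum vanishes.  On the diagonal each term is 1 and there are 2^(n - |A :|: B|)
   admissible S.  The 4^n vectors beta_{K,I,J} are then orthonormal in a space of
   dimension (2^n)^2, hence a basis.
   For (2), n_M c_{I,J} = +-c_{M :|: I, M :|: J} writes beta_{K,I,J} as an element of O_k
   under the degree condition; conversely <beta_{K,I,J}, c^*(omega) c(eta)> <> 0 forces
   basis indices A, B with |A| + |B| = r + s, I = A :\: B, J = B :\: A and K contained
   in A :&: B, which yields the degree condition. *)

Ltac mem_cases :=
  repeat match goal with |- context [in_mem ?x ?A] => case: (in_mem x A) end.

Section FinsetPointwise.
Variable T : finType.
Implicit Types A B : {set T}.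

Lemma disjoint_mem A B x : [disjoint A & B] -> ~~ ((x \in A) && (x \in B)).
Proof. by move=> dAB; apply/negP => /andP[xA]; rewrite (disjointFr dAB xA). Qed.

Lemma subset_mem A B x : A \subset B -> (x \in A) ==> (x \in B).
Proof. by move=> /subsetP sAB; apply/implyP/sAB. Qed.

Lemma eqset_forall A B : (A == B) = [forall x, (x \in A) == (x \in B)].
Proof. by apply/eqP/forallP => [-> x|eqAB]; [rewrite eqxx|apply/setP => x; exact/eqP]. Qed.

Lemma subset_forall A B : (A \subset B) = [forall x, (x \in A) ==> (x \in B)].
Proof. by apply/subsetP/forallP => sAB x; [apply/implyP/sAB|move/implyP: (sAB x)]. Qed.

Lemma disjoint_forall A B : [disjoint A & B] = [forall x, ~~ ((x \in A) && (x \in B))].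
Proof.
rewrite -setI_eq0 eqset_forall; apply: eq_forallb => x.
by rewrite !inE; mem_cases.
Qed.

Lemma forall_andb (P Q : pred T) :
  [forall x, P x] && [forall x, Q x] = [forall x, P x && Q x].
Proof.
apply/andP/forallP => [[/forallP P1 /forallP Q1] x|PQ]; first by rewrite P1 Q1.
by split; apply/forallP => x; case/andP: (PQ x).
Qed.

Lemma disjointsUl A1 A2 B :
  [disjoint A1 :|: A2 & B] = [disjoint A1 & B] && [disjoint A2 & B].
Proof.
rewrite !disjoint_forall forall_andb; apply: eq_forallb => x.
by rewrite !inE; mem_cases.
Qed.

Lemma disjointsUr A B1 B2 :
  [disjoint A & B1 :|: B2] = [disjoint A & B1] && [disjoint A & B2].
Proof. by rewrite ![[disjoint A & _]]disjoint_sym disjointsUl. Qed.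

Lemma eq_setU_disjoint A B S :
  (S == A :|: B) && [disjoint A & B] = (B == S :\: A) && (A \subset S).
Proof.
rewrite !eqset_forall disjoint_forall subset_forall !forall_andb.
by apply: eq_forallb => x; rewrite !inE; mem_cases.
Qed.

Definition toggle (x : T) A : {set T} := [set y | (y \in A) (+) (y == x)].

Lemma toggleK x : involutive (toggle x).
Proof. by move=> A; apply/setP => y; rewrite !inE addbK. Qed.

Lemma toggle_inj x : injective (toggle x).
Proof. exact: inv_inj (toggleK x). Qed.

Lemma toggleE x A : toggle x A = if x \in A then A :\ x else x |: A.
Proof.
by apply/setP => y; case: ifP => xA; rewrite !inE;
  case: eqP => [->|]; rewrite ?xA ?addbT ?addbF ?orbF.
Qed.

End FinsetPointwise.

Lemma sumr_neq0_exists (T : finType) (V : nmodType) (F : T -> V) :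
  \sum_t F t != 0 -> exists t, F t != 0.
Proof.
move=> sF; apply/existsP; apply: contraR sF; rewrite negb_exists => /forallP F0.
by rewrite big1 // => t _; apply/eqP/negbNE/F0.
Qed.

Lemma sum_subsets_expr (R : comPzRingType) (T : finType) (A : {set T}) (x : R) :
  \sum_(I : {set T} | I \subset A) x ^+ #|I| = (1 + x) ^+ #|A|.
Proof.
have -> : (1 + x) ^+ #|A| = \prod_i ((if i \in A then x else 0) + 1).
  rewrite -prodr_const big_mkcond /=; apply: eq_bigr => i _.
  by case: (i \in A); rewrite ?add0r // addrC.
rewrite bigA_distr big_mkcond /=; apply: eq_bigr => J _.
rewrite -(big_mkcond (fun i => i \in J)) /=.
have [JA|/subsetPn[i iJ iA]] := boolP (J \subset A).
  by rewrite -prodr_const; apply: eq_bigr => i iJ; rewrite (subsetP JA).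
by rewrite (bigD1 i) //= (negbTE iA) mul0r.
Qed.

Section FockOperators.
Variables (C : numClosedFieldType) (n : nat).
Local Notation FIdx := (FIdx n).
Local Notation FOp := (FOp C n).
Local Notation FVec := (FVec C n).
Local Notation fdim := (fdim n).
Local Notation coord := (Defs.coord (C:=C) (n:=n)).
Local Notation phi := (phi C).
Local Notation wsign := (wsign C).
Local Notation bK := (bK C).
Local Notation cAB := (cAB C).
Local Notation nA := (nA C).
Local Notation beta := (beta C).
Implicit Types (A B I J K L M S : FIdx) (X Y : FOp) (w e : FVec).

(* [monop f g] maps the basis vector phi_S to [g S *: phi_(f S)]. *)
Definition monop (f : FIdx -> FIdx) (g : FIdx -> C) : FOp :=
  \matrix_(i, j) ((enum_val i == f (enum_val j))%:R * g (enum_val j)).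

Lemma sum_enum_val (F : FIdx -> C) : \sum_(i < fdim) F (enum_val i) = \sum_S F S.
Proof.
by symmetry; rewrite (reindex (enum_val : 'I_fdim -> FIdx)) //; apply/onW_bij/enum_val_bij.
Qed.

Lemma sum_delta (T0 : FIdx) (F : FIdx -> C) : \sum_S (S == T0)%:R * F S = F T0.
Proof.
rewrite (bigD1 T0) //= eqxx mul1r big1 ?addr0 // => S /negbTE->.
by rewrite mul0r.
Qed.

Lemma monopM f1 g1 f2 g2 :
  monop f1 g1 *m monop f2 g2 = monop (f1 \o f2) (fun S => g1 (f2 S) * g2 S).
Proof.
apply/matrixP => i j; rewrite !mxE.
under eq_bigr do rewrite !mxE.
rewrite (sum_enum_val (fun T => (enum_val i == f1 T)%:R * g1 T *
                                ((T == f2 (enum_val j))%:R * g2 (enum_val j)))).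
under eq_bigr do rewrite mulrC -mulrA.
by rewrite sum_delta /= mulrA mulrC.
Qed.

Lemma eq_monop f g f' g' : g =1 g' -> (forall S, g S != 0 -> f S = f' S) ->
  monop f g = monop f' g'.
Proof.
move=> eq_g eq_f; apply/matrixP => i j; rewrite !mxE -eq_g.
by have [->|/eq_f ->] := eqVneq (g (enum_val j)) 0; rewrite ?mulr0.
Qed.

Lemma monop1 : monop id (fun _ => 1) = 1%:M.
Proof.
apply/matrixP => i j; rewrite !mxE mulr1.
by rewrite (inj_eq (bij_inj (@enum_val_bij _))).
Qed.

Lemma scale_monop c f g : c *: monop f g = monop f (fun S => c * g S).
Proof. by apply/matrixP => i j; rewrite !mxE mulrCA. Qed.

Lemma sum_monop (T : finType) (P : pred T) (c : T -> C) f (g : T -> FIdx -> C) :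
  \sum_(x | P x) c x *: monop f (g x) = monop f (fun S => \sum_(x | P x) c x * g x S).
Proof.
apply/matrixP => i j; rewrite !mxE summxE mulr_sumr; apply: eq_bigr => x _.
by rewrite !mxE mulrCA.
Qed.

Lemma hs_monop f1 g1 f2 g2 :
  hs (monop f1 g1) (monop f2 g2) = \sum_S (f1 S == f2 S)%:R * (g1 S)^* * g2 S.
Proof.
rewrite /hs /mxtrace -(sum_enum_val (fun S => (f1 S == f2 S)%:R * (g1 S)^* * g2 S)).
apply: eq_bigr => i _; rewrite !mxE.
under eq_bigr do rewrite !mxE.
rewrite (sum_enum_val (fun T => ((T == f1 (enum_val i))%:R * g1 (enum_val i))^* *
                                ((T == f2 (enum_val i))%:R * g2 (enum_val i)))).
under eq_bigr do rewrite rmorphM /= conjC_nat -mulrA.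
by rewrite sum_delta mulrCA mulrA.
Qed.

Definition inversions A B : {set 'I_n * 'I_n} :=
  [set p | (p.1 \in A) && (p.2 \in B) && (p.2 < p.1)%N].

Lemma wsignE A B : wsign A B = (-1) ^+ #|inversions A B|.
Proof. by []. Qed.

Lemma conj_sign k : ((-1) ^+ k : C)^* = (-1) ^+ k.
Proof. by rewrite rmorphXn /= conjCN1. Qed.

Lemma sign_sq k : (-1) ^+ k * (-1) ^+ k = 1 :> C.
Proof. by rewrite -exprD -signr_odd oddD addbb. Qed.

Lemma wsign_sq A B : wsign A B * wsign A B = 1.
Proof. exact: sign_sq. Qed.

Lemma conj_wsign A B : (wsign A B)^* = wsign A B.
Proof. exact: conj_sign. Qed.

Lemma wsignUl A1 A2 B : [disjoint A1 & A2] ->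
  wsign (A1 :|: A2) B = wsign A1 B * wsign A2 B.
Proof.
move=> dA; rewrite !wsignE -exprD -cardsUI.
have -> : inversions A1 B :&: inversions A2 B = set0.
  apply/setP => p; rewrite !inE; move: (disjoint_mem p.1 dA).
  by mem_cases; rewrite ?andbF.
rewrite cards0 addn0 (_ : inversions _ B = inversions A1 B :|: inversions A2 B) //.
by apply/setP => p; rewrite !inE; case: (p.2 < p.1)%N; mem_cases; rewrite ?andbF.
Qed.

Lemma wsignUr A B1 B2 : [disjoint B1 & B2] ->
  wsign A (B1 :|: B2) = wsign A B1 * wsign A B2.
Proof.
move=> dB; rewrite !wsignE -exprD -cardsUI.
have -> : inversions A B1 :&: inversions A B2 = set0.
  apply/setP => p; rewrite !inE; move: (disjoint_mem p.2 dB).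
  by mem_cases; rewrite ?andbF.
rewrite cards0 addn0 (_ : inversions A _ = inversions A B1 :|: inversions A B2) //.
by apply/setP => p; rewrite !inE; case: (p.2 < p.1)%N; mem_cases; rewrite ?andbF.
Qed.

Lemma wsign0l B : wsign set0 B = 1.
Proof. by rewrite wsignE (_ : inversions _ _ = set0) ?cards0 //; apply/setP => p; rewrite !inE. Qed.

Lemma wsign1l_lt (a : 'I_n) B : (forall b, b \in B -> (a < b)%N) -> wsign [set a] B = 1.
Proof.
move=> aB; rewrite wsignE (_ : inversions _ _ = set0) ?cards0 //; apply/eqP; rewrite -subset0.
apply/subsetP => -[x y]; rewrite !inE /= => /andP[/andP[/eqP-> /aB ay] ya].
by rewrite ltnNge ltnW in ya.
Qed.

(* [phi_A /\ phi_S = cr_coef A S *: phi_(A :|: S)] *)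
Definition cr_coef A S : C := if [disjoint A & S] then wsign A S else 0.

Lemma cstarF_entry w i j : cstarF w i j =
  \sum_A (if (A :&: enum_val j == set0) && (A :|: enum_val j == enum_val i)
          then wsign A (enum_val j) * coord w A else 0).
Proof.
rewrite /cstarF /wedge !mxE; apply: eq_bigr => A _.
rewrite (bigD1 (enum_val j)) //= big1 ?addr0.
  by rewrite /Defs.coord /phi mxE enum_valK eqxx mulr1.
move=> B nBj; rewrite /Defs.coord /phi mxE (inj_eq enum_rank_inj) eq_sym (negbTE nBj).
by rewrite mulr0; case: ifP.
Qed.

Lemma coord_phi B A : coord (phi B) A = (A == B)%:R.
Proof. by rewrite /Defs.coord /phi mxE (inj_eq enum_rank_inj). Qed.

Lemma cstarF_phi A : cstarF (phi A) = monop (fun S => A :|: S) (cr_coef A).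
Proof.
apply/matrixP => i j; rewrite cstarF_entry mxE (bigD1 A) //= big1 ?addr0.
  rewrite coord_phi eqxx mulr1 /cr_coef -setI_eq0 [enum_val i == _]eq_sym.
  by case: (A :&: _ == set0); case: (A :|: _ == _); rewrite ?mulr0 ?mul0r ?mul1r.
by move=> B nBA; rewrite coord_phi (negbTE nBA) mulr0; case: ifP.
Qed.

Lemma cstarF_coord w : cstarF w = \sum_A coord w A *: cstarF (phi A).
Proof.
apply/matrixP => i j; rewrite cstarF_entry summxE; apply: eq_bigr => A _.
rewrite mxE cstarF_entry (bigD1 A) //= big1 ?addr0.
  by rewrite coord_phi eqxx mulr1; case: ifP; rewrite ?mulr0 // mulrC.
by move=> B nBA; rewrite coord_phi (negbTE nBA) mulr0; case: ifP.
Qed.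

Lemma prod_cstarF (s : seq 'I_n) : sorted (relpre val ltn) s ->
  \prod_(a <- s) cstarF (phi [set a]) =
  monop (fun S => [set x in s] :|: S) (cr_coef [set x in s]).
Proof.
elim: s => [_|a s IHs a_s].
  have -> : [set x in [::]] = set0 :> FIdx by apply/setP => x; rewrite !inE.
  rewrite big_nil -[1]/(1%:M) -monop1; apply: eq_monop => S.
    by rewrite /cr_coef -setI_eq0 set0I eqxx wsign0l.
  by rewrite set0U.
have lt_as : all (fun b : 'I_n => (a < b)%N) s.
  by move: a_s; rewrite /= path_sortedE => [/andP[]|x y z /=]; [|exact: ltn_trans].
rewrite big_cons IHs; last exact: path_sorted a_s.
rewrite cstarF_phi -mulmxE monopM.
have -> : [set x in a :: s] = [set a] :|: [set x in s] by apply/setP => x; rewrite !inE.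
apply: eq_monop => S; last by rewrite /= setUA.
have a_lt b : b \in [set x in s] -> (a < b)%N by rewrite inE => /(allP lt_as).
have d_as : [disjoint [set a] & [set x in s]].
  by rewrite disjoints1; apply/negP => /a_lt; rewrite ltnn.
rewrite /cr_coef /= disjointsUl disjointsUr d_as /=.
have [dsS|_] := boolP [disjoint [set x in s] & S]; last by rewrite andbF mulr0.
rewrite andbT wsignUl // wsignUr // wsign1l_lt // mul1r.
by case: ifP; rewrite ?mul0r.
Qed.

Lemma sorted_enum_set A : sorted (relpre val ltn) (enum A).
Proof.
rewrite /enum_mem -enumT; apply: sorted_filter => [x y z /=|]; first exact: ltn_trans.
by rewrite -sorted_map val_enum_ord; exact: iota_ltn_sorted.
Qed.

Lemma cstarA_phi A : cstarA C A = cstarF (phi A).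
Proof.
rewrite /cstarA /phi1 prod_cstarF ?sorted_enum_set // cstarF_phi.
by rewrite (_ : [set x in enum A] = A) //; apply/setP => x; rewrite !inE mem_enum.
Qed.

(* [c(phi_B) phi_S = an_coef B S *: phi_(S :\: B)] *)
Definition an_coef B S : C := if B \subset S then wsign B (S :\: B) else 0.

Lemma adj_cstarF_phi B : adj (cstarF (phi B)) = monop (fun S => S :\: B) (an_coef B).
Proof.
apply/matrixP => i j; rewrite cstarF_phi !mxE /cr_coef /an_coef.
have := eq_setU_disjoint B (enum_val i) (enum_val j).
case: (_ =P B :|: _) => _; case: (enum_val i =P _) => [->|_];
  case: [disjoint _ & _]; case: (B \subset _) => //= _;
  by rewrite ?mul0r ?mul1r ?conjC0 ?rmorphM /= ?conjC1 ?mul1r ?conj_wsign.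
Qed.

Lemma cAB_cstarF A B : cAB A B = cstarF (phi A) *m cF (phi B).
Proof. by rewrite /Defs.cAB /cA /cF !cstarA_phi. Qed.

Definition cAB_target A B S := A :|: (S :\: B).
Definition cAB_supp A B S := [disjoint A & S :\: B] && (B \subset S).
Definition cAB_coef A B S : C :=
  if cAB_supp A B S then wsign A (S :\: B) * wsign B (S :\: B) else 0.

Lemma cAB_monop A B : cAB A B = monop (cAB_target A B) (cAB_coef A B).
Proof.
rewrite cAB_cstarF /cF adj_cstarF_phi cstarF_phi monopM.
apply: eq_monop => // S; rewrite /cAB_coef /cAB_supp /cr_coef /an_coef /=.
by case: [disjoint _ & _]; case: (B \subset S); rewrite ?mulr0 ?mul0r.
Qed.

Lemma conj_cAB_coef A B S : (cAB_coef A B S)^* = cAB_coef A B S.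
Proof. by rewrite /cAB_coef; case: ifP; rewrite ?conjC0 // rmorphM /= !conj_wsign. Qed.

Lemma nA_monop M : nA M = monop id (fun S => (M \subset S)%:R).
Proof.
rewrite /Defs.nA cAB_monop; apply: eq_monop => S.
  rewrite /cAB_coef /cAB_supp wsign_sq.
  have -> : [disjoint M & S :\: M].
    by rewrite disjoint_forall; apply/forallP => x; rewrite !inE; mem_cases.
  by case: (M \subset S).
rewrite /cAB_coef; case: ifP => [/andP[_ sMS] _|_]; last by rewrite eqxx.
by apply/setP => x; move: (subset_mem x sMS); rewrite !inE; mem_cases.
Qed.

Lemma sum_subsets_sign K S :
  \sum_(I : FIdx | I \subset K) (-2) ^+ #|I| * (I \subset S)%:R = (-1) ^+ #|K :&: S| :> C.
Proof.
have -> : -1 = 1 + -2 :> C by ring.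
rewrite -sum_subsets_expr.
under [RHS]eq_bigl do rewrite subsetI.
by rewrite big_mkcondr; apply: eq_bigr => I _; case: (I \subset S); rewrite ?mulr1 ?mulr0.
Qed.

Lemma bK_monop K : bK K = monop id (fun S => (-1) ^+ #|K :&: S|).
Proof.
rewrite /Defs.bK; under eq_bigr do rewrite nA_monop.
by rewrite sum_monop; apply: eq_monop => // S; rewrite sum_subsets_sign.
Qed.

Lemma bK_set0 : bK (set0 : FIdx) = 1%:M.
Proof. by rewrite bK_monop -monop1; apply: eq_monop => // S; rewrite set0I cards0. Qed.

Definition bKcAB_coef K A B S : C := (-1) ^+ #|K :&: cAB_target A B S| * cAB_coef A B S.

Lemma bKcAB_monop K A B : bK K *m cAB A B = monop (cAB_target A B) (bKcAB_coef K A B).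
Proof. by rewrite bK_monop cAB_monop monopM. Qed.

Lemma conj_bKcAB_coef K A B S : (bKcAB_coef K A B S)^* = bKcAB_coef K A B S.
Proof. by rewrite rmorphM /= conj_sign conj_cAB_coef. Qed.

Lemma bKcAB_coef_sq K A B S : bKcAB_coef K A B S * bKcAB_coef K A B S = (cAB_supp A B S)%:R.
Proof.
rewrite /bKcAB_coef /cAB_coef; case: ifP => _; last by rewrite !mulr0.
by rewrite mulrACA sign_sq mul1r mulrACA !wsign_sq mulr1.
Qed.

Definition hs_term K I J L A B S : C :=
  (cAB_target I J S == cAB_target A B S)%:R * bKcAB_coef K I J S * bKcAB_coef L A B S.

Lemma hs_bKcAB_sum K I J L A B :
  hs (bK K *m cAB I J) (bK L *m cAB A B) = \sum_S hs_term K I J L A B S.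
Proof. by rewrite !bKcAB_monop hs_monop; apply: eq_bigr => S _; rewrite conj_bKcAB_coef. Qed.

Lemma hs_term_neq0 K I J L A B S : [disjoint I & J] -> hs_term K I J L A B S != 0 ->
  I = A :\: B /\ J = B :\: A.
Proof.
move=> dIJ; rewrite /hs_term /bKcAB_coef /cAB_coef.
case: (cAB_target I J S =P _) => [eqT|_]; last by rewrite !mul0r eqxx.
have [/andP[d1 s1]|_] := boolP (cAB_supp I J S); last by rewrite !(mulr0, mul0r) eqxx.
have [/andP[d2 s2]|_] := boolP (cAB_supp A B S); last by rewrite !(mulr0, mul0r) eqxx.
move=> _; move/setP: eqT => eqT.
by split; apply/setP => x; move: (eqT x) (disjoint_mem x d1) (subset_mem x s1)
  (disjoint_mem x d2) (subset_mem x s2) (disjoint_mem x dIJ); rewrite !inE; mem_cases.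
Qed.

Lemma cAB_target_toggle A B x S : x \notin A -> x \notin B ->
  cAB_target A B (toggle x S) = toggle x (cAB_target A B S).
Proof.
move=> xA xB; apply/setP => y; rewrite !inE.
by case: eqP => [->|]; rewrite ?addbF ?addbT // (negbTE xA) (negbTE xB).
Qed.

Lemma setD_toggle B x S : x \notin B -> toggle x S :\: B = toggle x (S :\: B).
Proof.
move=> xB; apply/setP => y; rewrite !inE.
by case: eqP => [->|]; rewrite ?addbF // (negbTE xB).
Qed.

Lemma cAB_supp_toggle A B x S : x \notin A -> x \notin B ->
  cAB_supp A B (toggle x S) = cAB_supp A B S.
Proof.
move=> xA xB; rewrite /cAB_supp setD_toggle //.
rewrite !disjoint_forall !subset_forall !forall_andb; apply: eq_forallb => y.
by rewrite !inE; case: eqP => [->|]; rewrite ?addbF // (negbTE xA) (negbTE xB).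
Qed.

Lemma wsign_toggle A x R : wsign A (toggle x R) = wsign A R * wsign A [set x].
Proof.
rewrite toggleE; case: ifP => xR.
  rewrite -[in wsign A R](setD1K xR) setUC wsignUr; first by rewrite -mulrA wsign_sq mulr1.
  by rewrite disjoint_sym disjoints1 !inE eqxx.
by rewrite setUC wsignUr // disjoint_sym disjoints1 xR.
Qed.

Lemma cAB_coef_toggle A B x S : x \notin A -> x \notin B ->
  cAB_coef A B (toggle x S) = cAB_coef A B S * (wsign A [set x] * wsign B [set x]).
Proof.
move=> xA xB; rewrite /cAB_coef cAB_supp_toggle //; case: ifP; rewrite ?mul0r // => _.
by rewrite setD_toggle // !wsign_toggle mulrACA.
Qed.

Lemma wsign_setD_pair A B R : wsign (A :\: B) R * wsign (B :\: A) R = wsign A R * wsign B R.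
Proof.
have splitD (E F : FIdx) : wsign E R = wsign (E :\: F) R * wsign (E :&: F) R.
  rewrite -wsignUl; first by rewrite setUC setID.
  by rewrite disjoint_forall; apply/forallP => y; rewrite !inE; mem_cases.
by rewrite (splitD A B) (splitD B A) setIC mulrACA wsign_sq mulr1.
Qed.

Lemma sign_toggle K R x :
  (-1) ^+ #|K :&: toggle x R| = (-1) ^+ #|K :&: R| * (if x \in K then -1 else 1) :> C.
Proof.
have [xK|xK] := boolP (x \in K); last first.
  rewrite mulr1 (_ : K :&: toggle x R = K :&: R) //; apply/setP => y; rewrite !inE.
  by case: eqP => [->|]; rewrite ?addbF // (negbTE xK).
have -> : K :&: toggle x R = toggle x (K :&: R).
  by apply/setP => y; rewrite !inE; case: eqP => [->|]; rewrite ?addbF ?addbT ?xK.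
rewrite toggleE; case: ifP => xKR.
  by rewrite [in RHS](cardsD1 x) xKR add1n exprS; ring.
by rewrite cardsU1 xKR add1n exprS; ring.
Qed.

(* Toggling x multiplies the b_K and b_L signs by opposite factors and both c-coefficients
   by the same factor. *)
Lemma hs_term_toggle K L A B x S : x \notin A :|: B -> (x \in K) != (x \in L) ->
  hs_term K (A :\: B) (B :\: A) L A B (toggle x S) =
  - hs_term K (A :\: B) (B :\: A) L A B S.
Proof.
rewrite inE negb_or => /andP[xA xB] xKL.
have xAB : x \notin A :\: B by rewrite inE (negbTE xA) andbF.
have xBA : x \notin B :\: A by rewrite inE (negbTE xB) andbF.
rewrite /hs_term /bKcAB_coef !cAB_target_toggle // (inj_eq (@toggle_inj _ x)) !sign_toggle.
rewrite !cAB_coef_toggle // wsign_setD_pair.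
set eK := if x \in K then _ else _; set w := wsign A [set x] * wsign B [set x].
have -> : (if x \in L then -1 else 1) = - eK.
  by move: xKL; rewrite /eK; case: (x \in K); case: (x \in L); rewrite ?opprK.
have signs_sq : eK * eK * (w * w) = 1.
  by rewrite /w [_ * _ * (_ * _)]mulrACA !wsign_sq /eK; case: (_ \in _); rewrite ?mulrNN !mulr1.
set t := (_ == _)%:R; set sK := (-1) ^+ #|K :&: _|; set sL := (-1) ^+ #|L :&: _|.
set cI := cAB_coef (A :\: B) _ S; set cA := cAB_coef A B S.
by rewrite -[RHS]mulr1 -signs_sq; ring.
Qed.

Lemma sum_hs_term_eq0 K L A B x : x \notin A :|: B -> (x \in K) != (x \in L) ->
  \sum_S hs_term K (A :\: B) (B :\: A) L A B S = 0.
Proof.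
move=> xAB xKL; set s := \sum_S _.
have s_opp : s = - s.
  rewrite {1}/s (reindex_inj (@toggle_inj _ x)) /= -sumrN.
  by apply: eq_bigr => S _; rewrite hs_term_toggle.
by apply/eqP; move/eqP: s_opp; rewrite -addr_eq0 -mulr2n mulrn_eq0.
Qed.

Lemma card_cAB_supp A B : [disjoint A & B] ->
  #|[set S | cAB_supp A B S]| = (2 ^ (n - #|A :|: B|))%N.
Proof.
move=> dAB.
have -> : [set S | cAB_supp A B S] = (fun R => R :|: B) @: powerset (~: (A :|: B)).
  apply/setP => S; rewrite inE; apply/andP/imsetP => [[dA sB]|[R]].
    exists (S :\: B).
      rewrite powersetE subset_forall; apply/forallP => y.
      by move: (disjoint_mem y dA) (subset_mem y sB); rewrite !inE; mem_cases.
    by apply/setP => y; move: (subset_mem y sB); rewrite !inE; mem_cases.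
  rewrite powersetE => sR ->; rewrite disjoint_forall subset_forall; split;
  by apply/forallP => y; move: (subset_mem y sR) (disjoint_mem y dAB); rewrite !inE; mem_cases.
rewrite card_in_imset; last first.
  move=> R1 R2; rewrite !powersetE => sR1 sR2 /setP eqR; apply/setP => y.
  by move: (subset_mem y sR1) (subset_mem y sR2) (eqR y); rewrite !inE; mem_cases.
by rewrite card_powerset -(addKn #|A :|: B| #|~: (A :|: B)|) cardsC card_ord.
Qed.

Lemma hs_bKcAB_diag K A B : [disjoint A & B] ->
  hs (bK K *m cAB A B) (bK K *m cAB A B) = 2 ^+ (n - #|A :|: B|).
Proof.
move=> dAB; rewrite hs_bKcAB_sum /hs_term.
under eq_bigr do rewrite eqxx mul1r bKcAB_coef_sq.
rewrite (eq_bigr (fun S => if cAB_supp A B S then 1 else 0)); last by move=> S _; case: cAB_supp.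
by rewrite -big_mkcond sumr_const -natrX -(card_cAB_supp dAB) cardsE.
Qed.

Lemma hs_bKcAB_neq0 K I J L A B : [disjoint I & J] ->
  hs (bK K *m cAB I J) (bK L *m cAB A B) != 0 ->
  [/\ I = A :\: B, J = B :\: A & forall x, x \notin A :|: B -> (x \in K) = (x \in L)].
Proof.
move=> dIJ; rewrite hs_bKcAB_sum => hs_neq0.
have [S /(hs_term_neq0 dIJ) [eqI eqJ]] := sumr_neq0_exists hs_neq0.
split=> // x xAB; apply/eqP; apply: contraNT hs_neq0 => xKL.
by rewrite eqI eqJ (sum_hs_term_eq0 xAB xKL).
Qed.

Lemma hs_bKcAB K A B L A' B' : disj3 K A B -> disj3 L A' B' ->
  hs (bK K *m cAB A B) (bK L *m cAB A' B')
    = ((A == A') && (B == B') && (K == L))%:R * 2 ^+ (n - #|A :|: B|).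
Proof.
move=> /and3P[dKA dKB dAB] /and3P[dLA dLB dAB'].
have [/andP[/andP[/eqP<- /eqP<-] /eqP<-]|neq] := boolP ((A == A') && (B == B') && (K == L)).
  by rewrite hs_bKcAB_diag // mul1r.
rewrite mul0r; apply/eqP; apply: contraNT neq => /(hs_bKcAB_neq0 dAB) [eqA eqB eqK].
have eA : A = A' by rewrite eqA; apply/setDidPl.
have eB : B = B' by rewrite eqB; apply/setDidPl; rewrite disjoint_sym.
rewrite eA eB !eqxx eqset_forall; apply/forallP => x.
have [xAB|/eqK->//] := boolP (x \in A' :|: B').
move: (disjoint_mem x dKA) (disjoint_mem x dKB) (disjoint_mem x dLA) (disjoint_mem x dLB) xAB.
by rewrite eA eB !inE; mem_cases.
Qed.

Lemma adjD X Y : adj (X + Y) = adj X + adj Y.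
Proof. by apply/matrixP => i j; rewrite !mxE rmorphD. Qed.

Lemma adjZ c X : adj (c *: X) = c^* *: adj X.
Proof. by apply/matrixP => i j; rewrite !mxE rmorphM. Qed.

Lemma adj0 : adj (0 : FOp) = 0.
Proof. by apply/matrixP => i j; rewrite !mxE conjC0. Qed.

Lemma adj_sum_scale (T : Type) (r : seq T) (P : pred T) (k : T -> C) (F : T -> FOp) :
  adj (\sum_(i <- r | P i) k i *: F i) = \sum_(i <- r | P i) (k i)^* *: adj (F i).
Proof.
elim: r => [|x r IHr]; first by rewrite !big_nil adj0.
by rewrite !big_cons; case: (P x); rewrite ?adjD ?adjZ IHr.
Qed.

Lemma hs_sumr_scale (T : Type) (r : seq T) (P : pred T) (k : T -> C) (F : T -> FOp) X :
  hs X (\sum_(i <- r | P i) k i *: F i) = \sum_(i <- r | P i) k i * hs X (F i).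
Proof.
rewrite /hs mulmx_sumr raddf_sum; apply: eq_bigr => i _.
by rewrite -scalemxAr; exact: mxtraceZ.
Qed.

Lemma hs_suml_scale (T : Type) (r : seq T) (P : pred T) (k : T -> C) (F : T -> FOp) X :
  hs (\sum_(i <- r | P i) k i *: F i) X = \sum_(i <- r | P i) (k i)^* * hs (F i) X.
Proof.
rewrite /hs adj_sum_scale mulmx_suml raddf_sum; apply: eq_bigr => i _.
by rewrite -scalemxAl; exact: mxtraceZ.
Qed.

Lemma hsZl c X Y : hs (c *: X) Y = c^* * hs X Y.
Proof. by rewrite /hs adjZ -scalemxAl mxtraceZ. Qed.

Lemma hsZr c X Y : hs X (c *: Y) = c * hs X Y.
Proof. by rewrite /hs -scalemxAr mxtraceZ. Qed.

Lemma hsBr X Y Z : hs X (Y - Z) = hs X Y - hs X Z.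
Proof. by rewrite /hs mulmxBr raddfB. Qed.

Lemma hs_eq0 X : hs X X = 0 -> X = 0.
Proof.
rewrite /hs /mxtrace => hsXX; apply/matrixP => i j; rewrite mxE.
have norm0 : \sum_j0 \sum_i0 `|X i0 j0| ^+ 2 = 0.
  rewrite -[RHS]hsXX; apply: eq_bigr => j0 _; rewrite !mxE; apply: eq_bigr => i0 _.
  by rewrite !mxE normCK mulrC.
move/eqP: norm0; rewrite psumr_eq0 => [/allP/(_ j (mem_index_enum _))|j0 _]; last first.
  by apply: sumr_ge0 => i0 _; apply: exprn_ge0.
rewrite psumr_eq0 => [/allP/(_ i (mem_index_enum _))|i0 _]; last exact: exprn_ge0.
by rewrite sqrf_eq0 normr_eq0 => /eqP.
Qed.

Definition beta_norm I J : C := sqrtC (2 ^+ (n - #|I :|: J|)).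

Lemma betaE K I J : beta K I J = (beta_norm I J)^-1 *: (bK K *m cAB I J).
Proof. by []. Qed.

Lemma beta_norm_neq0 I J : beta_norm I J != 0.
Proof. by rewrite sqrtC_eq0 expf_neq0 // pnatr_eq0. Qed.

Lemma conj_beta_norm_inv I J : ((beta_norm I J)^-1)^* = (beta_norm I J)^-1.
Proof. by apply: geC0_conj; rewrite invr_ge0 sqrtC_ge0 exprn_ge0 // ler0n. Qed.

Lemma beta_norm_sqr I J : beta_norm I J ^+ 2 = 2 ^+ (n - #|I :|: J|).
Proof. exact: sqrtCK. Qed.

Lemma hs_beta K I J L I' J' : disj3 K I J -> disj3 L I' J' ->
  hs (beta K I J) (beta L I' J') = ((K, I, J) == (L, I', J'))%:R.
Proof.
move=> dKIJ dLIJ; rewrite !betaE hsZl hsZr hs_bKcAB // conj_beta_norm_inv.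
have [/andP[/andP[/eqP<- /eqP<-] /eqP<-]|neq] := boolP ((I == I') && (J == J') && (K == L)).
  rewrite !eqxx mul1r -beta_norm_sqr mulrA -invrM ?unitfE ?beta_norm_neq0 //.
  by rewrite -expr2 mulVf // expf_neq0 // beta_norm_neq0.
have -> : ((K, I, J) == (L, I', J')) = false.
  by apply: contraNF neq => /eqP[-> -> ->]; rewrite !eqxx.
by rewrite mul0r !mulr0.
Qed.

Local Notation triple := (FIdx * FIdx * FIdx)%type.
Local Notation disjt t := (disj3 t.1.1 t.1.2 t.2).
Local Notation betat t := (beta t.1.1 t.1.2 t.2).

Lemma hs_betat (u t : triple) : disjt u -> disjt t -> hs (betat u) (betat t) = (u == t)%:R.
Proof. by case: u => [[K I] J]; case: t => [[L I'] J']; exact: hs_beta. Qed.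

(* Encode a colouring [f : 'I_n -> 'I_4] as the triple of its colour classes 1, 2, 3. *)
Lemma card_disj3_ge : (4 ^ n <= #|[pred t : triple | disjt t]|)%N.
Proof.
pose classes (f : {ffun 'I_n -> 'I_4}) : triple :=
  ([set x | val (f x) == 1%N], [set x | val (f x) == 2%N], [set x | val (f x) == 3%N]).
have classes_inj : injective classes.
  move=> f g [/setP eq1 /setP eq2 /setP eq3]; apply/ffunP => x; apply: val_inj.
  move: (eq1 x) (eq2 x) (eq3 x); rewrite !inE.
  by case: (f x) => -[|[|[|[|?]]]] //=; case: (g x) => -[|[|[|[|?]]]].
have -> : (4 ^ n = #|[seq classes f | f : {ffun 'I_n -> 'I_4}]|)%N.
  by rewrite card_image // card_ffun !card_ord.
apply/subset_leq_card/subsetP => _ /imageP[f _ ->]; rewrite inE /= /disj3 !disjoint_forall.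
by apply/and3P; split; apply/forallP => x; rewrite !inE; case: (val (f x)) => [|[|[|[|?]]]].
Qed.

Lemma orthonormal_free (s : seq FOp) :
  (forall i j, (i < size s)%N -> (j < size s)%N -> hs s`_i s`_j = (i == j)%:R) -> free s.
Proof.
move=> orth_s; suff : free (in_tuple s) by [].
apply/freeP => k sum0 i; have := congr1 (hs s`_i) sum0.
have hs0 : hs s`_i 0 = 0 by rewrite /hs mulmx0 mxtrace0.
rewrite hs_sumr_scale hs0 (bigD1 i) //= big1 ?addr0.
  by rewrite orth_s // eqxx mulr1.
by move=> j ji; rewrite orth_s // (negbTE (_ : i != j :> nat)) ?mulr0 // eq_sym.
Qed.

Lemma hs_span_orthogonal_eq0 (s : seq FOp) Y : Y \in <<s>>%VS ->
  (forall i, (i < size s)%N -> hs s`_i Y = 0) -> Y = 0.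
Proof.
move=> Ys orth_Y; apply: hs_eq0; rewrite {1}(@coord_span _ _ _ (in_tuple s) _ Ys).
by rewrite hs_suml_scale big1 // => i _; rewrite orth_Y ?mulr0.
Qed.

Definition triples : seq triple := enum [pred t : triple | disjt t].
Definition betas : seq FOp := [seq betat t | t <- triples].

Lemma disjt_nth_triples k : (k < size triples)%N -> disjt (nth (set0, set0, set0) triples k).
Proof. by move=> lt_k; have := mem_nth (set0, set0, set0) lt_k; rewrite mem_enum. Qed.

Lemma betas_nth i : (i < size betas)%N ->
  exists2 t : triple, disjt t & betas`_i = betat t.
Proof.
rewrite size_map => lt_i; exists (nth (set0, set0, set0) triples i).
  exact: disjt_nth_triples.
exact: nth_map.
Qed.

Lemma betas_orthonormal i j : (i < size betas)%N -> (j < size betas)%N ->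
  hs betas`_i betas`_j = (i == j)%:R.
Proof.
rewrite size_map => lt_i lt_j.
by rewrite !(nth_map (set0, set0, set0)) // hs_betat ?disjt_nth_triples // nth_uniq ?enum_uniq.
Qed.

Lemma span_betas : <<betas>>%VS = fullv.
Proof.
apply/eqP; rewrite eqEdim subvf /= (eqP (orthonormal_free betas_orthonormal)).
rewrite dimvf dim_matrix size_map -cardE; apply: leq_trans card_disj3_ge.
rewrite /fdim -cardsT -powersetT card_powerset cardsT card_ord.
by rewrite -[(_ * _)%R]/(muln _ _) -expnMn.
Qed.

Lemma beta_expansion X : X = \sum_(t : triple | disjt t) hs (betat t) X *: betat t.
Proof.
apply/eqP; rewrite -subr_eq0; apply/eqP.
apply: (@hs_span_orthogonal_eq0 betas); first by rewrite span_betas memvf.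
move=> i /betas_nth[u du ->]; rewrite hsBr hs_sumr_scale (bigD1 u) //= big1 ?addr0.
  by rewrite hs_betat // eqxx mulr1 subrr.
by move=> t /andP[dt neq]; rewrite hs_betat // eq_sym (negbTE neq) mulr0.
Qed.

Lemma hs_bKcAB_cAB_neq0 K I J A B : disj3 K I J ->
  hs (bK K *m cAB I J) (cAB A B) != 0 ->
  [/\ I = A :\: B, J = B :\: A & K \subset A :&: B].
Proof.
move=> /and3P[dKI dKJ dIJ]; rewrite -[cAB A B]mul1mx -bK_set0.
move=> /(hs_bKcAB_neq0 dIJ) [eqI eqJ eqK]; split=> //; apply/subsetP => x xK.
have xAB : x \in A :|: B by apply/negPn/negP => /eqK; rewrite xK inE.
move: (disjoint_mem x dKI) (disjoint_mem x dKJ) xAB; rewrite eqI eqJ !inE xK.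
by mem_cases.
Qed.

Lemma hs_cstarF_cF X w e : hs X (cstarF w *m cF e) =
  \sum_A \sum_B coord w A * (coord e B)^* * hs X (cAB A B).
Proof.
rewrite (cstarF_coord w) /cF (cstarF_coord e) adj_sum_scale mulmx_suml.
under eq_bigr do rewrite -scalemxAl mulmx_sumr.
rewrite hs_sumr_scale; apply: eq_bigr => A _.
under eq_bigr do rewrite -scalemxAr.
rewrite hs_sumr_scale mulr_sumr; apply: eq_bigr => B _.
by rewrite cAB_cstarF mulrA.
Qed.

Lemma homog_card r w A : homog r w -> coord w A != 0 -> #|A| = r.
Proof. by move=> hw; apply: contraNeq => /hw ->. Qed.

Lemma degree_of_hs_beta_neq0 K I J k r s w e : disj3 K I J -> homog r w -> homog s e ->
  (exists l, (l <= k)%N /\ (r + s = 2 * l)%N) ->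
  hs (beta K I J) (cstarF w *m cF e) != 0 ->
  exists l, (l <= k)%N /\ (#|I| + #|J| + 2 * #|K| = 2 * l)%N.
Proof.
move=> dKIJ hw he [l [le_lk rs_l]].
rewrite betaE hsZl mulf_eq0 negb_or => /andP[_].
rewrite hs_cstarF_cF => /sumr_neq0_exists[A] /sumr_neq0_exists[B].
rewrite !mulf_eq0 !negb_or conjC_eq0 => /andP[/andP[wA eB] hsAB].
have [eqI eqJ sKAB] := hs_bKcAB_cAB_neq0 dKIJ hsAB.
have := homog_card hw wA; have := homog_card he eB.
have := cardsID B A; have := cardsID A B; have := subset_leq_card sKAB.
rewrite eqI eqJ [B :&: A]setIC => *.
(* r + s = #|A :\: B| + #|B :\: A| + 2 * #|A :&: B| and #|K| <= #|A :&: B| *)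
by exists (l - (#|A :&: B| - #|K|))%N; split; lia.
Qed.

Lemma inO_degree K I J k X : disj3 K I J -> inO k X -> hs (beta K I J) X != 0 ->
  exists l, (l <= k)%N /\ (#|I| + #|J| + 2 * #|K| = 2 * l)%N.
Proof.
move=> dKIJ [m [a [r [s [w [e [deg_rs [hom ->]]]]]]]].
rewrite hs_sumr_scale => /sumr_neq0_exists[i]; rewrite mulf_eq0 negb_or => /andP[_].
by have [hw he] := hom i; exact: degree_of_hs_beta_neq0 dKIJ hw he (deg_rs i).
Qed.

Lemma inO0 k : inO k (0 : FOp).
Proof.
exists 0%N, (fun _ => 0), (fun _ => 0%N), (fun _ => 0%N), (fun _ => 0), (fun _ => 0).
by split; [case|split; [case|rewrite big_ord0]].
Qed.

Lemma inOZ k c X : inO k X -> inO k (c *: X).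
Proof.
case=> [m [a [r [s [w [e [deg_rs [hom ->]]]]]]]].
exists m, (fun i => c * a i), r, s, w, e; do 2!split => //.
by rewrite scaler_sumr; apply: eq_bigr => i _; rewrite scalerA.
Qed.

Definition join_fam (T : Type) m1 m2 (f : 'I_m1 -> T) (g : 'I_m2 -> T)
    (i : 'I_(m1 + m2)) : T :=
  match split i with inl j => f j | inr j => g j end.

Lemma join_fam_lshift T m1 m2 f g (j : 'I_m1) : @join_fam T m1 m2 f g (lshift m2 j) = f j.
Proof. by rewrite /join_fam -[lshift m2 j]/(unsplit (inl j)) unsplitK. Qed.

Lemma join_fam_rshift T m1 m2 f g (j : 'I_m2) : @join_fam T m1 m2 f g (rshift m1 j) = g j.
Proof. by rewrite /join_fam -[rshift m1 j]/(unsplit (inr j)) unsplitK. Qed.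

Lemma inOD k X Y : inO k X -> inO k Y -> inO k (X + Y).
Proof.
case=> [m1 [a1 [r1 [s1 [w1 [e1 [deg1 [hom1 ->]]]]]]]].
case=> [m2 [a2 [r2 [s2 [w2 [e2 [deg2 [hom2 ->]]]]]]]].
exists (m1 + m2)%N, (join_fam a1 a2), (join_fam r1 r2), (join_fam s1 s2),
  (join_fam w1 w2), (join_fam e1 e2).
split; first by move=> i; rewrite /join_fam; case: (split i).
split; first by move=> i; rewrite /join_fam; case: (split i).
rewrite big_split_ord /=; congr (_ + _); apply: eq_bigr => i _.
  by rewrite !join_fam_lshift.
by rewrite !join_fam_rshift.
Qed.

Lemma inO_sum k (P : pred FIdx) (c : FIdx -> C) (F : FIdx -> FOp) :
  (forall M, P M -> inO k (F M)) -> inO k (\sum_(M | P M) c M *: F M).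
Proof.
move=> inO_F; apply: (big_ind (inO k)); [exact: inO0|exact: inOD|].
by move=> M PM; apply/inOZ/inO_F.
Qed.

Lemma homog_phi A : homog #|A| (phi A).
Proof. by move=> A' nA'; rewrite coord_phi; case: (A' =P A) nA' => [->|]; rewrite ?eqxx. Qed.

Lemma inO_cAB k A B : (exists l, (l <= k)%N /\ (#|A| + #|B| = 2 * l)%N) ->
  inO k (cAB A B).
Proof.
move=> deg_AB; exists 1%N, (fun _ => 1), (fun _ => #|A|), (fun _ => #|B|),
  (fun _ => phi A), (fun _ => phi B).
split=> //; split; first by move=> _; split; apply: homog_phi.
by rewrite big_ord1 scale1r cAB_cstarF.
Qed.

Lemma nA_cAB M I J : [disjoint M & I] -> [disjoint M & J] -> [disjoint I & J] ->
  nA M *m cAB I J = (wsign J M * wsign I M) *: cAB (M :|: I) (M :|: J).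
Proof.
move=> dMI dMJ dIJ; rewrite nA_monop !cAB_monop monopM scale_monop.
have supp_MIJ S : (M \subset cAB_target I J S) && cAB_supp I J S =
                  cAB_supp (M :|: I) (M :|: J) S.
  rewrite /cAB_supp /cAB_target !disjoint_forall !subset_forall !forall_andb.
  apply: eq_forallb => x; move: (disjoint_mem x dMI) (disjoint_mem x dMJ) (disjoint_mem x dIJ).
  by rewrite !inE; mem_cases.
apply: eq_monop => S /=.
  rewrite /cAB_coef -supp_MIJ; case sMT: (M \subset _) => /=; last first.
    by rewrite mul0r; case: cAB_supp; rewrite ?mulr0.
  case supp_S: (cAB_supp I J S); rewrite ?mulr0 // mul1r.
  have sMS : M \subset S.
    move: (supp_MIJ S); rewrite sMT supp_S => /esym/andP[_].
    by apply: subset_trans; apply: subsetUl.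
  have eqD : S :\: J = (S :\: (M :|: J)) :|: M.
    by apply/setP => x; move: (disjoint_mem x dMJ) (subset_mem x sMS); rewrite !inE; mem_cases.
  have dDM : [disjoint S :\: (M :|: J) & M].
    by rewrite disjoint_forall; apply/forallP => x; rewrite !inE; mem_cases.
  rewrite eqD !wsignUr // !wsignUl // -[LHS]mulr1 -(wsign_sq M (S :\: (M :|: J))).
  by ring.
rewrite mulf_eq0 negb_or => /andP[]; have [sMT _ _|_] := boolP (M \subset _).
  2: by rewrite eqxx.
apply/setP => x; move: (disjoint_mem x dMI) (disjoint_mem x dMJ) (subset_mem x sMT).
by rewrite /cAB_target !inE; mem_cases.
Qed.

Lemma beta_inO k K I J : disj3 K I J ->
  (exists l, (l <= k)%N /\ (#|I| + #|J| + 2 * #|K| = 2 * l)%N) -> inO k (beta K I J).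
Proof.
move=> /and3P[dKI dKJ dIJ] [l [le_lk deg_l]].
rewrite betaE; apply: inOZ; rewrite /Defs.bK mulmx_suml.
under eq_bigr => M sMK do rewrite -scalemxAl nA_cAB ?scalerA ?(disjointWl sMK) //.
apply: inO_sum => M sMK; apply: inO_cAB.
have := cardsUI M I; have := cardsUI M J; have := subset_leq_card sMK.
rewrite !disjoint_setI0 ?cards0 ?(disjointWl sMK) // => *.
(* #|M :|: I| + #|M :|: J| = #|I| + #|J| + 2 * #|M| with #|M| <= #|K| *)
by exists (l - (#|K| - #|M|))%N; split; lia.
Qed.

End FockOperators.

Theorem mainTheorem1 (C : numClosedFieldType) (n : nat) :
  (forall K A B L C' D : FIdx n,
     disj3 K A B -> disj3 L C' D ->
     hs (bK C K *m cAB C A B) (bK C L *m cAB C C' D)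
       = ((A == C') && (B == D) && (K == L))%:R * (2 : C) ^+ (n - #|A :|: B|)) /\
  (forall K I J L I' J' : FIdx n,
     disj3 K I J -> disj3 L I' J' ->
     hs (beta C K I J) (beta C L I' J') = ((K, I, J) == (L, I', J'))%:R) /\
  (forall X : FOp C n,
     exists coef : FIdx n * FIdx n * FIdx n -> C,
       X = \sum_(t : FIdx n * FIdx n * FIdx n | disj3 t.1.1 t.1.2 t.2)
             coef t *: beta C t.1.1 t.1.2 t.2) /\
  (forall k : nat,
     (forall X : FOp C n,
        ((exists K I J : FIdx n, disj3 K I J /\ X = beta C K I J) /\ inO k X)
        <-> (exists K I J : FIdx n,
               [/\ disj3 K I J,
                   (exists l, (l <= k)%N /\ (#|I| + #|J| + 2 * #|K| = 2 * l)%N)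
                 & X = beta C K I J])) /\
     (forall X : FOp C n, inO k X ->
        exists coef : FIdx n * FIdx n * FIdx n -> C,
          (forall t : FIdx n * FIdx n * FIdx n,
             disj3 t.1.1 t.1.2 t.2 -> coef t != 0 -> inO k (beta C t.1.1 t.1.2 t.2)) /\
          X = \sum_(t : FIdx n * FIdx n * FIdx n | disj3 t.1.1 t.1.2 t.2)
                coef t *: beta C t.1.1 t.1.2 t.2)).
Proof.
split; [exact: hs_bKcAB|split; [exact: hs_beta|split]].
  by move=> X; exists (fun t => hs (beta C t.1.1 t.1.2 t.2) X); exact: beta_expansion.
move=> k; split=> [X|X inO_X]; first split.
- case=> [[K [I [J [dKIJ ->]]]] inO_beta]; exists K, I, J; split=> //.
  by apply: (inO_degree dKIJ inO_beta); rewrite hs_beta // eqxx oner_neq0.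
- by case=> K [I [J [dKIJ deg ->]]]; split; [exists K, I, J|exact: beta_inO].
- exists (fun t => hs (beta C t.1.1 t.1.2 t.2) X); split; last exact: beta_expansion.
  by move=> t dt hs_neq0; apply: beta_inO => //; exact: inO_degree dt inO_X hs_neq0.
Qed.
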